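(* There does not exist any GRLOWJFA that accepts the language $\{a^nb^n : n\ge 0\}$.
   Context: ''Subword'' means a contiguous factor. A GRLOWJFA is a tuple $\mathcal{A}=(\Sigma,Q,q_0,F,R)$ with $\Sigma$ a finite alphabet, $Q$ a finite state set, $q_0\in Q$, $F\subseteq Q$, and $R\subset Q\times\Sigma^+\times Q$ a finite set of rules such that for each $p\in Q$, $w\in\Sigma^+$ at most one $q$ has $(p,w,q)\in R$ (meaning: go from $p$ to $q$ deleting $w$). $\Sigma_p=\{w:(p,w,q)\in R\text{ for some }q\}$. Configurations lie in $\Sigma^*Q\Sigma^*$. Moves $\curvearrowright$: (1) for $t,u,v\in\Sigma^*$ and $(p,x,q)\in R$: $tpuxv\curvearrowright tuqv$ provided $u$ contains no word of $\Sigma_p$ as a subword and there are no $u_1,x_2\in\Sigma^*$, $u_2,x_1\in\Sigma^+$ with $u=u_1u_2$, $x=x_1x_2$, $u_2x_1=x$; (2) for $x\in\Sigma^+$, $y\in\Sigma^*$ with $y$ containing no word of $\Sigma_p$ as a subword: $xpy\curvearrowright pxy$. The accepted language is $L_{GRL}(\mathcal{A})=\{w\in\Sigma^*: q_0w\curvearrowright^* q_f \text{ for some } q_f\in F\}$. *)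

From mathcomp Require Import all_boot.
Set Implicit Arguments. Unset Strict Implicit. Unset Printing Implicit Defensive.

Record GRLOWJFA (Sigma : finType) := {
  state : finType;
  q0 : state;
  final : pred state;
  rules : seq (state * seq Sigma * state);
  rules_nonempty : forall p w q, (p, w, q) \in rules -> w != [::];
  rules_det : forall p w q q', (p, w, q) \in rules -> (p, w, q') \in rules -> q = q'
}.

Section Moves.
Variables (Sigma : finType) (A : GRLOWJFA Sigma).

Definition in_Sigma_p (p : state A) (w : seq Sigma) : Prop :=
  exists q, (p, w, q) \in @rules Sigma A.

Definition no_Sigma_p_subword (p : state A) (u : seq Sigma) : Prop :=
  forall w, in_Sigma_p p w -> ~~ infix w u.

(* configuration t p y  in  Sigma^* Q Sigma^*  represented as (t, p, y) *)
Definition config := (seq Sigma * state A * seq Sigma)%type.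

Inductive move : config -> config -> Prop :=
| move_delete (t u v x : seq Sigma) (p q : state A) :
    (p, x, q) \in @rules Sigma A ->
    no_Sigma_p_subword p u ->
    ~ (exists u1 u2 x1 x2 : seq Sigma,
          u2 != [::] /\ x1 != [::] /\ u = u1 ++ u2 /\ x = x1 ++ x2 /\ u2 ++ x1 = x) ->
    move (t, p, u ++ x ++ v) (t ++ u, q, v)
| move_jump (x y : seq Sigma) (p : state A) :
    x != [::] ->
    no_Sigma_p_subword p y ->
    move (x, p, y) ([::], p, x ++ y).

Inductive moves : config -> config -> Prop :=
| moves_refl c : moves c c
| moves_step c1 c2 c3 : move c1 c2 -> moves c2 c3 -> moves c1 c3.

Definition accepts (w : seq Sigma) : Prop :=
  exists qf, @final Sigma A qf /\ moves ([::], @q0 Sigma A, w) ([::], qf, [::]).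

End Moves.

From mathcomp Require Import all_boot.
From mathcomp Require Import zify.

Set Implicit Arguments. Unset Strict Implicit. Unset Printing Implicit Defensive.

(* Whatever the order in which a GRLOWJFA deletes factors of its input, the
   deleted factors, concatenated in order, label a chain of rules from q0 to
   a final state, and this label is a permutation of the input; conversely
   the automaton accepts the label of any such chain by deleting it from left
   to right.  Accepting a^N b^N thus yields a chain of rules labelled by a^N b^N
   itself.  For N large the part of the chain inside the a-block visits some
   state twice; cutting out that loop gives a chain, hence an accepted word,
   with fewer a's than b's. *)

Section RulePaths.
Variables (Sigma : finType) (A : GRLOWJFA Sigma).

Inductive rpath : state A -> seq Sigma -> state A -> Prop :=
| rpath_nil p : rpath p [::] p
| rpath_cons p (x : seq Sigma) p' z q :
    (p, x, p') \in rules A -> rpath p' z q -> rpath p (x ++ z) q.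

Lemma rpath_cat p u s v q : rpath p u s -> rpath s v q -> rpath p (u ++ v) q.
Proof.
elim=> [//|p0 x p' z q' rule_x _ IHz] path_v.
by rewrite -catA; apply: rpath_cons rule_x (IHz path_v).
Qed.

Lemma no_Sigma_p_subword_nil p : @no_Sigma_p_subword _ A p [::].
Proof. by move=> w [q /rules_nonempty]; case: w. Qed.

Lemma move_delete_front p x q y :
  (p, x, q) \in rules A -> move ([::], p, x ++ y) ([::], q, y).
Proof.
move=> rule_x; apply: (@move_delete _ _ [::] [::] y x p q rule_x).
  exact: no_Sigma_p_subword_nil.
by case=> u1 [u2 [x1 [x2 [+ [_ [+ _]]]]]]; case: u2 => //; case: u1.
Qed.

Lemma rpath_moves p w q y : rpath p w q -> moves ([::], p, w ++ y) ([::], q, y).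
Proof.
move=> path_w; elim: path_w y => [p0 y|p0 x p' z q' rule_x _ IHz y].
  exact: moves_refl.
by rewrite -catA; apply: moves_step (move_delete_front _ rule_x) (IHz y).
Qed.

Lemma moves_rpath c1 c2 : moves c1 c2 ->
  exists D, rpath c1.1.2 D c2.1.2 /\ perm_eq (D ++ c2.1.1 ++ c2.2) (c1.1.1 ++ c1.2).
Proof.
elim=> [c|c1' c2' c3 step _ [D [path_D perm_D]]].
  by exists [::]; split; [apply: rpath_nil | apply: perm_refl].
case: step path_D perm_D => [t u v x p q rule_x _ _|x y p _ _] /= path_D perm_D.
  exists (x ++ D); split; first exact: rpath_cons rule_x path_D.
  rewrite -catA (perm_trans (_ : perm_eq _ (x ++ (t ++ u) ++ v))) //.
    by rewrite perm_cat2l.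
  by rewrite perm_catCA -!catA.
by exists D.
Qed.

Lemma accepts_rpath w : accepts A w ->
  exists D qf, [/\ final qf, rpath (q0 A) D qf & perm_eq D w].
Proof.
case=> qf [final_qf /moves_rpath [D [path_D]]]; rewrite /= !cats0 => perm_D.
by exists D, qf.
Qed.

Lemma rpath_accepts D qf : final qf -> rpath (q0 A) D qf -> accepts A D.
Proof.
move=> final_qf path_D; exists qf; split => //.
by have := rpath_moves [::] path_D; rewrite cats0.
Qed.

Definition rule_size_max := \max_(r <- rules A) size r.1.2.

Lemma rule_size_le p (x : seq Sigma) q :
  (p, x, q) \in rules A -> size x <= rule_size_max.
Proof.
by move=> rule_x; apply: (@leq_bigmax_seq _ _ xpredT (fun r => size r.1.2) _ rule_x).
Qed.

Lemma rule_size_gt0 p (x : seq Sigma) q : (p, x, q) \in rules A -> 0 < size x.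
Proof. by rewrite lt0n size_eq0 => /rules_nonempty. Qed.

Lemma rpath_split_cat p u v q : rpath p (u ++ v) q ->
  exists u1 u2 s, [/\ u = u1 ++ u2, size u2 <= rule_size_max,
                      rpath p u1 s & rpath s (u2 ++ v) q].
Proof.
move e_w: (u ++ v) => w path_w.
elim: path_w u e_w => [p0|p0 x p' z q' rule_x path_z IHz] u e_w.
  by exists [::], [::], p0; case: u e_w => //= ->; split => //; apply: rpath_nil.
have [le_xu|lt_ux] := leqP (size x) (size u).
  have [u' e_u e_z] : exists2 u', u = x ++ u' & z = u' ++ v.
    have e_x : take (size x) u = x by rewrite -(takel_cat v le_xu) e_w take_size_cat.
    have e_u : u = x ++ drop (size x) u by rewrite -{1}(cat_take_drop (size x) u) e_x.
    exists (drop (size x) u) => //.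
    by have := congr1 (drop (size x)) e_w; rewrite {1}e_u -catA !drop_size_cat.
  have [u1 [u2 [s [e_u' le_u2 path_u1 path_u2]]]] := IHz _ (esym e_z).
  exists (x ++ u1), u2, s; split => //; first by rewrite e_u e_u' catA.
  exact: rpath_cons rule_x path_u1.
exists [::], u, p0; split => //.
- exact: leq_trans (ltnW lt_ux) (rule_size_le rule_x).
- exact: rpath_nil.
- by rewrite e_w; apply: rpath_cons rule_x path_z.
Qed.

(* Strengthened for the induction: [vs] are distinct states visited by the path. *)
Lemma rpath_shorten_or_visits p w s : rpath p w s ->
  (exists2 w', size w' < size w & rpath p w' s) \/
  exists vs : seq (state A), [/\ uniq vs, size w <= rule_size_max * size vs &
    forall v, v \in vs -> exists2 w', size w' <= size w & rpath v w' s].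
Proof.
elim=> [p0|p0 x p' z q rule_x path_z [[z' lt_z' path_z']|[vs [uniq_vs le_z reach_vs]]]].
- by right; exists [::].
- left; exists (x ++ z'); first by rewrite !size_cat ltn_add2l.
  exact: rpath_cons rule_x path_z'.
have size_x := rule_size_gt0 rule_x; have le_x := rule_size_le rule_x.
have [p0_vs|p0_vs] := boolP (p0 \in vs).
  have [w' le_w' path_w'] := reach_vs _ p0_vs.
  by left; exists w' => //; rewrite size_cat; lia.
right; exists (p0 :: vs); split; first by rewrite /= p0_vs.
  by rewrite size_cat /= mulnS; lia.
move=> v; rewrite inE => /predU1P [->|/reach_vs [w' le_w' path_w']].
  by exists (x ++ z) => //; apply: rpath_cons rule_x path_z.
by exists w' => //; rewrite size_cat; lia.
Qed.

Lemma rpath_pump p w s : rpath p w s -> rule_size_max * #|state A| < size w ->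
  exists2 w', size w' < size w & rpath p w' s.
Proof.
case/rpath_shorten_or_visits => [//|[vs [uniq_vs le_w _]] lt_w].
have le_vs : size vs <= #|state A| by rewrite -(card_uniqP uniq_vs) max_card.
by move: lt_w; rewrite ltnNge (leq_trans le_w (leq_mul (leqnn _) le_vs)).
Qed.

Lemma rpath_pump_prefix p u v q : rpath p (u ++ v) q ->
  rule_size_max * #|state A| + rule_size_max < size u ->
  exists2 u', size u' < size u & rpath p (u' ++ v) q.
Proof.
case/rpath_split_cat => u1 [u2 [s [-> le_u2 path_u1 path_u2]]] lt_u.
have [|u1' lt_u1' path_u1'] := rpath_pump path_u1; first by rewrite size_cat in lt_u; lia.
exists (u1' ++ u2); first by rewrite !size_cat ltn_add2r.
by rewrite -catA; apply: rpath_cat path_u1' path_u2.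
Qed.

End RulePaths.

Lemma count_anbn (T : eqType) (a b : T) (n : nat) : a != b ->
  count (pred1 a) (nseq n a ++ nseq n b) = count (pred1 b) (nseq n a ++ nseq n b).
Proof.
by move=> neq_ab; rewrite !count_cat !count_nseq /= !eqxx eq_sym (negbTE neq_ab) addnC.
Qed.

Theorem lemma9 (Sigma : finType) (a b : Sigma) :
  a != b -> (forall x : Sigma, x = a \/ x = b) ->
  ~ exists A : GRLOWJFA Sigma,
      forall w : seq Sigma,
        accepts A w <-> exists n : nat, w = nseq n a ++ nseq n b.
Proof.
move=> neq_ab _ [A L_A].
pose N := (rule_size_max A * #|state A| + rule_size_max A).+1.
have [D [qf [final_qf path_D perm_D]]] :=
  accepts_rpath (proj2 (L_A _) (ex_intro _ N erefl)).
have [n e_D] := proj1 (L_A D) (rpath_accepts final_qf path_D).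
have e_n : n = N.
  by move/perm_size: perm_D; rewrite e_D !size_cat !size_nseq; lia.
rewrite e_D e_n in path_D.
have [|u' lt_u' path_u'] := rpath_pump_prefix path_D; first by rewrite size_nseq.
rewrite size_nseq in lt_u'.
have [n' e_w] := proj1 (L_A _) (rpath_accepts final_qf path_u').
have := count_anbn n' neq_ab; rewrite -e_w !count_cat !count_nseq /= eqxx.
rewrite (eq_sym b) (negbTE neq_ab) mul0n mul1n addn0 => count_a.
have := count_size (pred1 a) u'.
by rewrite count_a leqNgt (leq_trans lt_u' (leq_addl _ _)).
Qed.
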